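(* For every zero-error variable-length $(k,N)$ network code for the network described in the context, the stopping time $N$ satisfies $$\Pr(N=n)\le \left(\tfrac{3}{8}\right)^k|\mathcal Z|^{2n}\quad\text{for every positive integer } n.$$
   Context: Network: source nodes $s_1,s_2,s_3$ and a terminal $t$, with edges $(s_3,s_1),(s_3,s_2),(s_1,t),(s_2,t)$. Source $s_j$ observes $\mathbf X_j=(\mathbf X_j(1),\dots,\mathbf X_j(k))\in\{0,1\}^k$; all $3k$ bits are i.i.d. uniform on $\{0,1\}$. The edges $(s_3,s_1),(s_3,s_2)$ deliver $\mathbf X_3$ to $s_1$ and $s_2$. $\mathcal Z$ is a finite alphabet with $|\mathcal Z|\ge 2$ and $\mathcal Z^*$ the set of finite sequences over $\mathcal Z$. A variable-length $(k,N)$ network code consists of: encoding maps $\phi_1,\phi_2:\{0,1\}^k\times\{0,1\}^k\to\mathcal Z^*$, giving the sequences $\mathbf Z_1=\phi_1(\mathbf X_1,\mathbf X_3)$ (sent on $(s_1,t)$) and $\mathbf Z_2=\phi_2(\mathbf X_2,\mathbf X_3)$ (sent on $(s_2,t)$), with $\mathbf Z_j(m)$ the $m$-th symbol; a random variable $N$ with values in the positive integers that is a stopping time for the sequence $(\mathbf Z_1(1),\mathbf Z_2(1)),(\mathbf Z_1(2),\mathbf Z_2(2)),\dots$ (the event $\{N=n\}$ is determined by $(\mathbf Z_1(m),\mathbf Z_2(m))_{m\le n}$); and a decoder $\psi$ giving the estimate $\hat{\boldsymbol\Sigma}=\psi(\mathbf Z_1^N,\mathbf Z_2^N)\in\{0,1,2,3\}^k$,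 where $\mathbf Z_j^N=(\mathbf Z_j(1),\dots,\mathbf Z_j(N))$. The target is the componentwise integer sum $\boldsymbol\Sigma=\mathbf X_1+\mathbf X_2+\mathbf X_3\in\{0,1,2,3\}^k$. The code is zero-error if $\Pr(\hat{\boldsymbol\Sigma}\neq\boldsymbol\Sigma)=0$. *)

From HB Require Import structures.
From mathcomp Require Import all_boot all_order all_algebra.
Set Implicit Arguments. Unset Strict Implicit. Unset Printing Implicit Defensive.
Import Order.TTheory GRing.Theory Num.Theory.

Definition bits (k : nat) := {ffun 'I_k -> bool}.

(* Sample space: outcomes (x1, x2, x3); all 3k bits i.i.d. uniform, i.e. the
   uniform distribution on this finite set. *)
Definition outcome (k : nat) := (bits k * bits k * bits k)%type.

Definition Pr (k : nat) (E : pred (outcome k)) : rat :=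
  (#|[set w : outcome k | E w]|%:R / #|{: outcome k}|%:R)%R.

Definition target (k : nat) (w : outcome k) : {ffun 'I_k -> nat} :=
  [ffun i => (w.1.1 i : nat) + (w.1.2 i : nat) + (w.2 i : nat)].

Record vl_code (k : nat) (Z : finType) := VLCode {
  phi1 : bits k -> bits k -> seq Z;          (* Z1 = phi1(X1, X3) *)
  phi2 : bits k -> bits k -> seq Z;          (* Z2 = phi2(X2, X3) *)
  stopN : outcome k -> nat;
  psi : seq Z -> seq Z -> {ffun 'I_k -> 'I_4}
}.

Definition Z1 k Z (c : vl_code k Z) (w : outcome k) : seq Z := phi1 c w.1.1 w.2.
Definition Z2 k Z (c : vl_code k Z) (w : outcome k) : seq Z := phi2 c w.1.2 w.2.

Definition valid_code k Z (c : vl_code k Z) : Prop :=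
  [/\ forall w, 0 < stopN c w,
      forall w, stopN c w <= size (Z1 c w) /\ stopN c w <= size (Z2 c w)
    & forall (n : nat) (w w' : outcome k),
        take n (Z1 c w) = take n (Z1 c w') ->
        take n (Z2 c w) = take n (Z2 c w') ->
        (stopN c w == n) = (stopN c w' == n)].

Definition estimate k Z (c : vl_code k Z) (w : outcome k) : {ffun 'I_k -> 'I_4} :=
  psi c (take (stopN c w) (Z1 c w)) (take (stopN c w) (Z2 c w)).

Definition zero_error k Z (c : vl_code k Z) : Prop :=
  Pr [pred w | [ffun i => val (estimate c w i)] != target w] = 0%R.

(* A bit triple is determined by its sum and a rank in {0,1,2}, since every
   sum class of {0,1}^3 has at most three elements.  On the event {N = n} the
   outcome is recovered from the two received n-symbol prefixes (which give the
   target, the code being zero-error) together with the k ranks, so this event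
   has at most |Z|^(2n) 3^k of the 8^k equally likely outcomes. *)

From HB Require Import structures.
From mathcomp Require Import all_boot all_order all_algebra.
Import Order.TTheory GRing.Theory Num.Theory.

Set Implicit Arguments. Unset Strict Implicit. Unset Printing Implicit Defensive.

Definition sum_class_rank_nat (a b c : bool) : nat :=
  if a != b then (if c == b then 0 else 1) else 2.

Lemma sum_class_rank_nat_lt3 a b c : (sum_class_rank_nat a b c < 3)%N.
Proof. by case: a; case: b; case: c. Qed.

Definition sum_class_rank (a b c : bool) : 'I_3 :=
  Ordinal (sum_class_rank_nat_lt3 a b c).

Lemma sum_class_rank_inj (a b c a' b' c' : bool) :
  (a + b + c = a' + b' + c')%N -> sum_class_rank a b c = sum_class_rank a' b' c' ->
  (a, b, c) = (a', b', c').
Proof.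
by move=> + /(congr1 val); case: a; case: b; case: c; case: a'; case: b'; case: c'.
Qed.

Definition tuple_of (T : Type) (n : nat) (x0 : T) (s : seq T) : n.-tuple T :=
  insubd (nseq_tuple n x0) s.

Lemma tuple_ofK (T : Type) (n : nat) (x0 : T) (s : seq T) :
  size s = n -> tuple_of n x0 s = s :> seq T.
Proof. by move=> sz_s; rewrite /tuple_of insubdK // unfold_in /= sz_s. Qed.

Lemma card_outcome k : #|{: outcome k}| = (8 ^ k)%N.
Proof. by rewrite !card_prod !card_ffun !card_bool !card_ord -!expnMn. Qed.

Lemma Pr_le_card k (E : pred (outcome k)) (m : nat) :
  (#|[set w | E w]| <= m)%N -> (Pr E <= m%:R / (8 ^ k)%:R :> rat)%R.
Proof.
by move=> le_Em; rewrite /Pr card_outcome ler_pM2r ?ler_nat // invr_gt0 ltr0n expn_gt0.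
Qed.

Section StopEvent.

Variables (k : nat) (Z : finType) (c : vl_code k Z).

Definition sum_class_ranks (w : outcome k) : {ffun 'I_k -> 'I_3} :=
  [ffun i => sum_class_rank (w.1.1 i) (w.1.2 i) (w.2 i)].

Lemma outcome_of_target_ranks (w w' : outcome k) :
  target w = target w' -> sum_class_ranks w = sum_class_ranks w' -> w = w'.
Proof.
case: w w' => [[x1 x2] x3] [[y1 y2] y3] /ffunP eq_t /ffunP eq_r.
have eq_bits i : (x1 i, x2 i, x3 i) = (y1 i, y2 i, y3 i).
  by apply: sum_class_rank_inj; [move: (eq_t i) | move: (eq_r i)]; rewrite !ffunE.
by congr (_, _, _); apply/ffunP => i; have [] := eq_bits i.
Qed.

Lemma zero_error_estimate : zero_error c ->
  forall w, [ffun i => val (estimate c w i)] = target w.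
Proof.
rewrite /zero_error /Pr card_outcome => /eqP.
rewrite mulf_eq0 invr_eq0 !pnatr_eq0 expn_eq0 orbF cards_eq0 => /eqP/setP no_err w.
by apply/eqP; apply: contraT => ne_w; move: (no_err w); rewrite !inE ne_w.
Qed.

Hypothesis hc : valid_code c.
Hypothesis hz : zero_error c.

Lemma card_stop_event (z0 : Z) (n : nat) :
  (#|[set w | stopN c w == n]| <= 3 ^ k * #|Z| ^ (2 * n))%N.
Proof.
have [_ stop_le_size _] := hc.
pose received w := (tuple_of n z0 (take n (Z1 c w)), tuple_of n z0 (take n (Z2 c w))).
have received_val w : stopN c w = n ->
    [/\ val (received w).1 = take n (Z1 c w) & val (received w).2 = take n (Z2 c w)].
  move=> stop_w; have [] := stop_le_size w; rewrite stop_w => le1 le2.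
  by split; rewrite /= tuple_ofK // size_takel.
pose f w := (received w, sum_class_ranks w).
have f_inj : {in [set w | stopN c w == n] &, injective f}.
  move=> w w'; rewrite !inE => /eqP stop_w /eqP stop_w' [eq_rcv1 eq_rcv2 eq_r].
  have [r1 r2] := received_val w stop_w; have [r1' r2'] := received_val w' stop_w'.
  have eq_est : estimate c w = estimate c w'.
    by rewrite /estimate stop_w stop_w' -r1 -r2 -r1' -r2' /= eq_rcv1 eq_rcv2.
  apply: outcome_of_target_ranks eq_r.
  by rewrite -!(zero_error_estimate hz) eq_est.
rewrite -(card_in_imset f_inj); apply: leq_trans (max_card _) _.
by rewrite !card_prod !card_tuple card_ffun !card_ord mulnC -expnD addnn -mul2n.
Qed.

End StopEvent.

Theorem lemma2 (k : nat) (Z : finType) (hZ : (2 <= #|Z|)%N)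
  (c : vl_code k Z) (hc : valid_code c) (hz : zero_error c) (n : nat) (hn : (0 < n)%N) :
  (Pr [pred w | stopN c w == n] <= (3%:R / 8%:R) ^+ k * (#|Z|%:R) ^+ (2 * n) :> rat)%R.
Proof.
have [z0 _] : {z0 : Z | true}.
  by case: (pickP (@predT Z)) hZ => [z _|/eq_card0 ->] //; exists z.
apply: le_trans (Pr_le_card (card_stop_event hc hz z0 n)) _.
by rewrite natrM !natrX expr_div_n mulrAC.
Qed.
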